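(* Let $t\geq3$, let $A_1,\dots,A_k\in\Pi_n^{(t)}$, let $\epsilon_1,\dots,\epsilon_k$ be independent uniformly distributed $\{-1,1\}$-valued random variables, and let $R=\lceil\log_2 n\rceil$. Then for $p\geq1$, $$\mathbb{E}\Big[\Big\|\sum_{i=1}^k\epsilon_iA_i\Big\|_{\ell_p,\dots,\ell_p}\Big]\leq2^t\sum_{\mathbf r\in[R]^t}\frac{\mathbb{E}\Big[\max\Big\{\Big(\sum_{i=1}^k\epsilon_iA_i\Big)(\mathbf x): \mathbf x\in H^n_{2^{r_1}}\times\cdots\times H^n_{2^{r_t}}\Big\}\Big]}{2^{(r_1+\cdots+r_t)/p}}.$$
   Context: For $d\in\mathbb{N}$, $H^n_d=\{x\in\{-1,0,1\}^n: \|x\|_{\ell_0}=\min\{d,n\}\}$, where $\|x\|_{\ell_0}$ is the number of nonzero entries; for $\mathbf x=(x[1],\dots,x[t])$ we write $A(\mathbf x)=A(x[1],\dots,x[t])$. $\Pi_n^{(t)}$ is the set of $t$-linear forms $A$ on $\mathbb{R}^n$ such that $|A(e_{s_1},\dots,e_{s_t})|$ summed over all indices except one fixed coordinate (i.e. $|A|(\mathbf 1,\dots,e_s,\dots,\mathbf 1)$, with $|A|$ the form with entries $|A(e_{s_1},\dots,e_{s_t})|$) is at most $1$ for every $s\in[n]$ and every position. $\|A\|_{\ell_p,\dots,\ell_p}=\sup\{A(x[1],\dots,x[t])/(\|x[1]\|_{\ell_p}\cdots\|x[t]\|_{\ell_p}): x[i]\neq0\}$. $[R]=\{1,\dots,R\}$.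 *)

From mathcomp Require Import all_boot all_order all_algebra.
From mathcomp Require Import boolp classical_sets reals exp.
Set Implicit Arguments. Unset Strict Implicit. Unset Printing Implicit Defensive.
Import Order.TTheory GRing.Theory Num.Theory.
Local Open Scope ring_scope.
Local Open Scope classical_set_scope.

(* A t-linear mlform on R^n, given by its coefficients A(e_{s_1},...,e_{s_t}),
   indexed by s : 'I_t -> 'I_n. *)
Definition mlform (R : realType) (n t : nat) := {ffun {ffun 'I_t -> 'I_n} -> R}.

Definition eval_form (R : realType) n t (A : mlform R n t) (x : 'I_t -> 'I_n -> R) : R :=
  \sum_(s : {ffun 'I_t -> 'I_n}) A s * \prod_(j < t) x j (s j).

(* A in Pi_n^(t): |A|(1,..,e_s,..,1) <= 1 for every position j and every s. *)
Definition in_Pi (R : realType) n t (A : mlform R n t) : Prop :=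
  forall (j : 'I_t) (s : 'I_n),
    \sum_(sg : {ffun 'I_t -> 'I_n} | sg j == s) `|A sg| <= 1.

Definition lpnorm (R : realType) n (p : R) (v : 'I_n -> R) : R :=
  (\sum_(i < n) `|v i| `^ p) `^ p^-1.

Definition opnorm (R : realType) n t (p : R) (A : mlform R n t) : R :=
  sup [set y | exists x : 'I_t -> 'I_n -> R,
        (forall j, exists i, x j i != 0) /\
        y = eval_form A x / \prod_(j < t) lpnorm p (x j)].

Definition inH (R : realType) n (d : nat) (v : 'I_n -> R) : Prop :=
  (forall i, v i \in [:: -1; 0; 1]) /\ #|[pred i | v i != 0]| = minn d n.

(* max { A(x) : x in H^n_{2^{r_1}} x ... x H^n_{2^{r_t}} } (finite nonempty set) *)
Definition maxH (R : realType) n t (A : mlform R n t) (r : 'I_t -> nat) : R :=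
  sup [set y | exists x : 'I_t -> 'I_n -> R,
        (forall j, inH (2 ^ r j) (x j)) /\ y = eval_form A x].

Definition signsum (R : realType) n t k (eps : {ffun 'I_k -> bool})
  (As : 'I_k -> mlform R n t) : mlform R n t :=
  [ffun sg => \sum_(i < k) (if eps i then 1 else -1) * As i sg].

Definition Esign (R : realType) k (f : {ffun 'I_k -> bool} -> R) : R :=
  (2 ^+ k)^-1 * \sum_(eps : {ffun 'I_k -> bool}) f eps.

From mathcomp Require Import all_boot all_order all_algebra.
From mathcomp Require Import boolp classical_sets reals exp.
From mathcomp Require Import ring.
Import Order.TTheory GRing.Theory Num.Theory.
Local Open Scope ring_scope.
Set Implicit Arguments. Unset Strict Implicit. Unset Printing Implicit Defensive.

(* Fix one form A.  Split every argument
   x[j] into R = up_log 2 n pieces according to the dyadic size of |x_i|^p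
   relative to ||x||_p^p: piece k (k = 0, ..., R - 1) has at most 2^(k+1)
   nonzero entries, each of modulus at most 2 ||x||_p / 2^((k+1)/p).  Expanding
   A multilinearly over the t-tuples of pieces gives R^t terms.  In each term,
   after rescaling, argument j lies in the set of vectors of [-1,1]^n with at
   most 2^(r_j) nonzero entries; a linear functional on that set is maximised
   at a point of H^n_(2^(r_j)), so, replacing the arguments one at a time, the
   term is at most the corresponding maxH. *)

Lemma card_superset (T : finType) (S : {set T}) m :
  (#|S| <= m <= #|T|)%N -> exists2 U : {set T}, S \subset U & #|U| = m.
Proof.
elim: m => [|m IH] /andP [leSm lemT].
  by exists S => //; apply/eqP; rewrite -leqn0.
have [ltSm | eqSm] := ltnP #|S| m.+1; last first.
  by exists S => //; apply/eqP; rewrite eqn_leq leSm.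
have [U sSU cardU] : exists2 U : {set T}, S \subset U & #|U| = m.
  by apply: IH; rewrite -ltnS ltSm ltnW.
have [x] : exists x, x \in ~: U.
  by apply/card_gt0P; move: lemT; rewrite -(cardsC U) cardU -addn1 leq_add2l.
rewrite inE => xNU.
exists (x |: U); first by rewrite (fintype.subset_trans sSU) ?subsetU1.
by rewrite cardsU1 xNU cardU.
Qed.

Section SparseBall.
Variables (R : realType) (n : nat).
Implicit Types (c v : 'I_n -> R).

Definition sparse_ball (d : nat) v : Prop :=
  (forall i, `|v i| <= 1) /\ (#|[set i | v i != 0%R]| <= minn d n)%N.

Lemma inH_sparse_ball d v : inH d v -> sparse_ball d v.
Proof.
case=> v_sign v_card; split.
  by move=> i; have := v_sign i; rewrite !inE => /or3P [] /eqP ->;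
    rewrite ?normrN ?normr1 ?normr0.
by rewrite -v_card; apply/eq_leq/eq_card => i; rewrite inE.
Qed.

Lemma sparse_ball_sign_max d c v : sparse_ball d v ->
  exists2 h, inH d h & \sum_i c i * v i <= \sum_i c i * h i.
Proof.
case=> v_le1 v_card.
have [U supp_sub cardU] : exists2 U : {set 'I_n}, [set i | v i != 0] \subset U & #|U| = minn d n.
  by apply: card_superset; rewrite v_card card_ord geq_minr.
pose h i : R := if i \in U then (if 0 <= c i then 1 else -1) else 0.
exists h.
  split=> [i|]; first by rewrite /h; case: ifP => _; [case: ifP => _|];
    rewrite !inE eqxx ?orbT.
  rewrite -cardU; apply: eq_card => i; rewrite /h inE.
  case: ifP => _; last by rewrite eqxx.
  by case: ifP => _; rewrite ?oppr_eq0 oner_eq0.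
apply: ler_sum => i _; rewrite /h.
case: ifPn => [_ | iNU]; last first.
  have /eqP -> : v i == 0 by apply: contraR iNU => vi0; apply/(fintype.subsetP supp_sub); rewrite inE.
  by rewrite !mulr0.
have cv_le : c i * v i <= `|c i| by rewrite (le_trans (ler_norm _)) // normrM ler_piMr.
case: (lerP 0 (c i)) => ci0; first by rewrite mulr1 (le_trans cv_le) // ger0_norm.
by rewrite mulrN1 (le_trans cv_le) // ltr0_norm.
Qed.

End SparseBall.

Section MultilinearForm.
Variables (R : realType) (n t : nat).
Implicit Types (A : mlform R n t) (x : 'I_t -> 'I_n -> R).

Definition eval_coef A x (j0 : 'I_t) (i : 'I_n) : R :=
  \sum_(s : {ffun 'I_t -> 'I_n} | s j0 == i) A s * \prod_(j < t | j != j0) x j (s j).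

Lemma eval_form_coef A x j0 : eval_form A x = \sum_i eval_coef A x j0 i * x j0 i.
Proof.
rewrite /eval_form (partition_big (fun s : {ffun 'I_t -> 'I_n} => s j0) xpredT) //=.
apply: eq_bigr => i _; rewrite /eval_coef mulr_suml; apply: eq_bigr => s /eqP <-.
by rewrite (bigD1 j0) //= mulrCA mulrC.
Qed.

Lemma eq_eval_coef A x y j0 :
  (forall j, j != j0 -> x j = y j) -> eval_coef A x j0 =1 eval_coef A y j0.
Proof.
by move=> eq_xy i; apply: eq_bigr => s _; congr (_ * _); apply: eq_bigr => j /eq_xy ->.
Qed.

Lemma eval_formZ A (a : 'I_t -> R) x :
  eval_form A (fun j i => a j * x j i) = \prod_j a j * eval_form A x.
Proof. by rewrite /eval_form mulr_sumr; apply: eq_bigr => s _; rewrite big_split mulrCA. Qed.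

Lemma eval_form_sum A (K : nat) (y : 'I_t -> 'I_K -> 'I_n -> R) :
  eval_form A (fun j i => \sum_(k < K) y j k i) =
  \sum_(r : {ffun 'I_t -> 'I_K}) eval_form A (fun j => y j (r j)).
Proof.
rewrite /eval_form exchange_big; apply: eq_bigr => s _.
by rewrite (bigA_distr_bigA (fun j k => y j k (s j))) mulr_sumr.
Qed.

Lemma eval_form_le_maxH A (d : 'I_t -> nat) x :
  (forall j, inH (2 ^ d j) (x j)) -> eval_form A x <= maxH A d.
Proof.
move=> xH; apply: sup_upper_bound; last by exists x.
split; first by exists (eval_form A x), x.
exists (\sum_s `|A s|) => z [y [yH ->]].
rewrite (le_trans (ler_norm _)) // (le_trans (ler_norm_sum _ _ _)) //.
apply: ler_sum => s _; rewrite normrM ler_piMr // normr_prod.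
by apply: prodr_ile1 => j _; rewrite normr_ge0; case: (inH_sparse_ball (yH j)) => ->.
Qed.

Lemma sparse_eval_form_le_maxH A (d : 'I_t -> nat) x :
  (forall j, sparse_ball (2 ^ d j) (x j)) -> eval_form A x <= maxH A d.
Proof.
move=> x_ball.
suff: forall m, (m <= t)%N -> forall x, (forall j, sparse_ball (2 ^ d j) (x j)) ->
    (forall j : 'I_t, (m <= j)%N -> inH (2 ^ d j) (x j)) -> eval_form A x <= maxH A d.
  by move/(_ t (leqnn t) x x_ball); apply=> j; rewrite leqNgt ltn_ord.
elim=> [|m IH] lt_mt {x_ball}x x_ball xH; first by apply: eval_form_le_maxH => j; apply: xH.
pose j0 : 'I_t := Ordinal lt_mt.
have [h hH le_h] := sparse_ball_sign_max (eval_coef A x j0) (x_ball j0).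
pose y j := if j == j0 then h else x j.
have eq_coef : eval_coef A x j0 =1 eval_coef A y j0.
  by apply: eq_eval_coef => j /negbTE nj0; rewrite /y nj0.
apply: le_trans (IH (ltnW lt_mt) y _ _).
- rewrite !(eval_form_coef _ _ j0).
  under [in X in _ <= X]eq_bigr do rewrite -eq_coef /y eqxx.
  exact: le_h.
- by move=> j; rewrite /y; case: eqP => [->|_]; [exact: inH_sparse_ball | exact: x_ball].
- move=> j le_mj; rewrite /y; case: eqP => [-> // | nj0]; apply: xH.
  rewrite ltn_neqAle le_mj andbT; apply: contra_notN nj0 => /eqP eq_mj.
  exact: val_inj.
Qed.

End MultilinearForm.

Section DyadicLevels.
Variables (R : realType) (n : nat) (p : R).
Hypotheses (p_ge1 : 1 <= p) (n_gt1 : (1 < n)%N).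
Implicit Types (a S : R) (v : 'I_n -> R).

Local Notation L := (up_log 2 n).

Definition level_pred a S m : bool := (L.-1 <= m)%N || (S < a * 2 ^+ m.+1).

Lemma level_pred_ex a S : exists m, level_pred a S m.
Proof. by exists L.-1; rewrite /level_pred leqnn. Qed.

Definition level a S : nat := ex_minn (level_pred_ex a S).

Lemma level_lt a S : (level a S < L)%N.
Proof.
rewrite /level; case: ex_minnP => m _ /(_ L.-1); rewrite /level_pred leqnn => /(_ isT).
by move/leq_ltn_trans; apply; rewrite prednK // up_log_gt0.
Qed.

Lemma level_lower a S : a <= S -> a * 2 ^+ level a S <= S.
Proof.
rewrite /level; case: ex_minnP => -[|m] _ min_m le_aS; first by rewrite mulr1.
have : ~~ level_pred a S m by apply: contraTN (ltnSn m) => /min_m; rewrite ltnNge.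
by rewrite /level_pred negb_or -leNgt => /andP [].
Qed.

Lemma level_upper a S : (level a S < L.-1)%N -> S < a * 2 ^+ (level a S).+1.
Proof. by rewrite /level; case: ex_minnP => m; rewrite /level_pred ltnNge => /orP [->|]. Qed.

Definition mass v i : R := `|v i| `^ p.
Definition lpmass v : R := \sum_i mass v i.
Definition vlevel v i : nat := level (mass v i) (lpmass v).
Definition level_weight (k : nat) : R := 2 `^ (k.+1%:R / p).

Lemma level_weight_gt0 k : 0 < level_weight k. Proof. exact: powR_gt0. Qed.

Lemma mass_le_lpmass v i : mass v i <= lpmass v.
Proof. by rewrite /lpmass (bigD1 i) //= lerDl sumr_ge0 // => j _; apply: powR_ge0. Qed.

Lemma lpnorm_gt0 v : (exists i, v i != 0) -> 0 < lpnorm p v.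
Proof.
case=> i vi0; apply: powR_gt0; apply: lt_le_trans (mass_le_lpmass v i).
by apply: powR_gt0; rewrite normr_gt0.
Qed.

Lemma norm_mul_level_weight v i : `|v i| * level_weight (vlevel v i) <= 2 * lpnorm p v.
Proof.
have p_gt0 : 0 < p := lt_le_trans ltr01 p_ge1.
set k := vlevel v i.
have mass_k : mass v i * 2 ^+ k <= lpmass v by apply/level_lower/mass_le_lpmass.
have mass_k_ge0 : 0 <= mass v i * 2 ^+ k by rewrite mulr_ge0 ?powR_ge0 ?exprn_ge0.
have root_k : `|v i| * 2 `^ (k%:R / p) <= lpnorm p v.
  have -> : `|v i| * 2 `^ (k%:R / p) = (mass v i * 2 ^+ k) `^ p^-1.
    rewrite powRM ?powR_ge0 ?exprn_ge0 // -powRrM mulfV ?gt_eqF // powRr1 //.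
    by rewrite -powR_mulrn // -powRrM.
  apply: ge0_ler_powR; rewrite ?nnegrE //; first by rewrite invr_ge0 ltW.
  exact: le_trans mass_k_ge0 mass_k.
have -> : level_weight k = 2 `^ (k%:R / p) * 2 `^ p^-1.
  by rewrite -powRD ?pnatr_eq0 ?implybT //; congr (_ `^ _); rewrite -natr1 mulrDl mul1r.
rewrite mulrA mulrC; apply: ler_pM; rewrite ?mulr_ge0 ?powR_ge0 //.
by rewrite ler1_powR ?ler1n ?invf_le1.
Qed.

Lemma card_vlevel v (k : nat) : (exists i, v i != 0) -> (k < L)%N ->
  (#|[set i | vlevel v i == k]| <= minn (2 ^ k.+1) n)%N.
Proof.
move=> v_nz lt_kL; set I := [set i | vlevel v i == k].
rewrite leq_min [(#|I| <= n)%N](leq_trans (max_card _)) ?card_ord // andbT.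
have [lt_k | ge_k] := ltnP k L.-1; last first.
  rewrite (leq_trans (max_card _)) // card_ord (leq_trans (@up_logP 2 n isT)) //.
  by rewrite leq_pexp2l //; rewrite -ltnS prednK ?up_log_gt0 ?n_gt1 in ge_k.
have mass_gt0 : 0 < lpmass v.
  by case: v_nz => i vi0; apply: lt_le_trans (mass_le_lpmass v i); rewrite powR_gt0 ?normr_gt0.
suff : #|I|%:R * lpmass v <= 2 ^+ k.+1 * lpmass v by rewrite ler_pM2r // -natrX ler_nat.
rewrite mulr_natl -sumr_const.
apply: (@le_trans _ _ (\sum_(i in I) mass v i * 2 ^+ k.+1)).
  apply: ler_sum => i; rewrite inE => /eqP vlevel_k; apply: ltW.
  by rewrite -vlevel_k level_upper // [level _ _]vlevel_k.
rewrite -mulr_suml mulrC ler_wpM2l ?exprn_ge0 // /lpmass [X in _ <= X](bigID [in I]) /=.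
by rewrite lerDl sumr_ge0 // => i _; apply: powR_ge0.
Qed.

Definition level_piece v (k : nat) i : R :=
  if vlevel v i == k then v i * level_weight k / (2 * lpnorm p v) else 0.

Lemma level_piece_sparse_ball v (k : nat) : (exists i, v i != 0) -> (k < L)%N ->
  sparse_ball (2 ^ k.+1) (level_piece v k).
Proof.
move=> v_nz lt_kL; have norm_gt0 := lpnorm_gt0 v_nz; split=> [i|].
  rewrite /level_piece; case: eqP => [<-|_]; last by rewrite normr0.
  have two_norm_gt0 : 0 < 2 * lpnorm p v by rewrite mulr_gt0.
  rewrite normf_div normrM (gtr0_norm (level_weight_gt0 _)) (gtr0_norm two_norm_gt0).
  by rewrite ler_pdivrMr // mul1r norm_mul_level_weight.
apply: leq_trans (card_vlevel v_nz lt_kL); apply/subset_leq_card/fintype.subsetP => i.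
by rewrite !inE /level_piece; case: (vlevel v i =P k) => // _; rewrite eqxx.
Qed.

Lemma level_piece_sum v i : (exists i, v i != 0) ->
  v i = \sum_(k < L) (2 * lpnorm p v / level_weight k) * level_piece v k i.
Proof.
move=> v_nz; have norm_gt0 := lpnorm_gt0 v_nz.
pose ki : 'I_L := Ordinal (level_lt (mass v i) (lpmass v)).
rewrite (bigD1 ki) //= big1 ?addr0 => [|k /eqP nk]; last first.
  rewrite /level_piece; case: (vlevel v i =P k) => [e|_]; last by rewrite mulr0.
  by case: nk; apply: val_inj; rewrite /= -e.
rewrite /level_piece eqxx; have := level_weight_gt0 ki.
by move=> w_gt0; field; rewrite !gt_eqF ?mulr_gt0.
Qed.

End DyadicLevels.

Section OperatorNormBound.
Variables (R : realType) (n t : nat) (p : R).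
Hypotheses (p_ge1 : 1 <= p) (n_gt1 : (1 < n)%N).

Local Notation L := (up_log 2 n).

Definition dyadic_maxH_bound (A : mlform R n t) : R :=
  2 ^+ t * \sum_(r : {ffun 'I_t -> 'I_L})
     maxH A (fun j => (r j).+1) / 2 `^ ((\sum_(j < t) (r j).+1)%:R / p).

Lemma prod_level_weight (r : 'I_t -> nat) :
  \prod_j level_weight p (r j) = 2 `^ ((\sum_(j < t) (r j).+1)%:R / p).
Proof.
rewrite natr_sum mulr_suml; apply/esym/(big_morph (powR 2)) => [a b|]; last exact: powRr0.
by rewrite powRD // pnatr_eq0 implybT.
Qed.

Lemma eval_form_div_lpnorm_le (A : mlform R n t) (x : 'I_t -> 'I_n -> R) :
  (forall j, exists i, x j i != 0) ->
  eval_form A x / \prod_j lpnorm p (x j) <= dyadic_maxH_bound A.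
Proof.
move=> x_nz; pose N j := lpnorm p (x j).
have N_gt0 j : 0 < N j := lpnorm_gt0 p (x_nz j).
pose c j (k : 'I_L) := 2 * N j / level_weight p k.
have c_ge0 j k : 0 <= c j k by rewrite divr_ge0 ?mulr_ge0 ?ltW ?level_weight_gt0.
have x_sum : x = fun j i => \sum_(k < L) c j k * level_piece p (x j) k i.
  by apply/funext => j; apply/funext => i; apply: level_piece_sum.
have N_prod_gt0 : 0 < \prod_j N j by apply: prodr_gt0 => j _; apply: N_gt0.
rewrite [in eval_form _ x]x_sum eval_form_sum ler_pdivrMr //.
rewrite /dyadic_maxH_bound mulr_sumr mulr_suml.
apply: ler_sum => r _; rewrite eval_formZ.
have le_maxH : eval_form A (fun j => level_piece p (x j) (r j)) <= maxH A (fun j => (r j).+1).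
  by apply: sparse_eval_form_le_maxH => j; apply: level_piece_sparse_ball.
apply: le_trans (ler_wpM2l _ le_maxH) _; first exact: prodr_ge0.
rewrite -prod_level_weight /c big_split big_split /= prodfV prodr_const card_ord.
by rewrite le_eqVlt; apply/predU1P; left; ring.
Qed.

Lemma opnorm_le_dyadic_maxH_bound (A : mlform R n t) : opnorm p A <= dyadic_maxH_bound A.
Proof.
apply: ge_sup => [|_ [x [x_nz ->]]]; last exact: eval_form_div_lpnorm_le.
exists (eval_form A (fun _ _ => 1) / \prod_(j < t) lpnorm p (fun _ : 'I_n => 1)).
by exists (fun _ _ => 1); split => // j; exists (Ordinal (ltnW n_gt1)); rewrite oner_eq0.
Qed.

End OperatorNormBound.

Section SignExpectation.
Variables (R : realType) (k : nat).
Implicit Types f g : {ffun 'I_k -> bool} -> R.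

Lemma ler_Esign f g : (forall eps, f eps <= g eps) -> Esign f <= Esign g.
Proof. by move=> le_fg; rewrite ler_wpM2l ?invr_ge0 ?exprn_ge0 // ler_sum. Qed.

Lemma EsignZ (c : R) f : Esign (fun eps => c * f eps) = c * Esign f.
Proof. by rewrite /Esign -mulr_sumr mulrCA. Qed.

Lemma EsignMr (c : R) f : Esign (fun eps => f eps * c) = Esign f * c.
Proof. by rewrite /Esign -mulr_suml mulrA. Qed.

Lemma Esign_sum (I : finType) (F : I -> {ffun 'I_k -> bool} -> R) :
  Esign (fun eps => \sum_i F i eps) = \sum_i Esign (F i).
Proof. by rewrite /Esign exchange_big mulr_sumr. Qed.

End SignExpectation.

Theorem lemma4p4 (R : realType) (n t k : nat) (p : R) (As : 'I_k -> mlform R n t) :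
  (3 <= t)%N -> (1 < n)%N -> 1 <= p -> (forall i, in_Pi (As i)) ->
  Esign (fun eps => opnorm p (signsum eps As)) <=
  2 ^+ t * \sum_(r : {ffun 'I_t -> 'I_(up_log 2 n)})
     Esign (fun eps => maxH (signsum eps As) (fun j => (r j).+1))
       / (2 `^ ((\sum_(j < t) (r j).+1)%:R / p)).
Proof.
move=> _ n_gt1 p_ge1 _.
have le_bound eps : opnorm p (signsum eps As) <= dyadic_maxH_bound p (signsum eps As).
  exact: opnorm_le_dyadic_maxH_bound.
apply: le_trans (ler_Esign le_bound) _.
rewrite /dyadic_maxH_bound EsignZ Esign_sum.
by under eq_bigr do rewrite EsignMr.
Qed.
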